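(* Let $p$ be a two-phase solution and let $(x,t)$ be a point where $\nu_1(x,t)>0$. Then $\partial_x\nu_1=\partial_t\nu_1=0$ at $(x,t)$ if and only if either (i) $\mu_1,\mu_2\in\mathbb R$, or (ii) $\mu_2^*=\mu_1$.
   Context: Let $p(x,t)$, $(x,t)\in\mathbb R^2$, be a smooth complex-valued solution of the focusing nonlinear Schrödinger equation $ip_t+p_{xx}+2|p|^2p=0$; $^*$ denotes complex conjugation and subscripts denote partial derivatives. Put $\mathbb U=\begin{pmatrix}-i\lambda& ip\\ ip^*& i\lambda\end{pmatrix}$ and $\mathbb V=\begin{pmatrix}-2i\lambda^2+i|p|^2& 2i\lambda p-p_x\\ 2i\lambda p^*+p^*_x& 2i\lambda^2-i|p|^2\end{pmatrix}$. The solution $p$ is called a two-phase solution if there exist real constants $c_0,c_1,c_2$ such that the matrix $\Psi=\begin{pmatrix}\Psi_{11}&\Psi_{12}\\ \Psi_{21}&-\Psi_{11}\end{pmatrix}$ with $\Psi_{11}=-i\lambda^3-ic_2\lambda^2+(\tfrac12 i|p|^2-ic_1)\lambda+\tfrac14(pp^*_x-p_xp^* )+\tfrac12 ic_2|p|^2-ic_0$, $\Psi_{12}=ip\lambda^2+(-\tfrac12p_x+ic_2p)\lambda-\tfrac14 ip_{xx}-\tfrac12 ip|p|^2-\tfrac12c_2p_x+ic_1p$, $\Psi_{21}=ip^*\lambda^2+(\tfrac12p^*_x+ic_2p^* )\lambda-\tfrac14 ip^*_{xx}-\tfrac12 ip^*|p|^2+\tfrac12c_2p^*_x+ic_1p^*$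 satisfies $\Psi_x=[\mathbb U,\Psi]$ and $\Psi_t=[\mathbb V,\Psi]$ identically in $\lambda\in\mathbb C$. Set $\nu_1=|p|^2$. At points where $p\neq0$ the Dirichlet eigenvalues $\mu_1,\mu_2\in\mathbb C$ are defined (up to order) by $\Psi_{12}(\lambda)=ip(\lambda-\mu_1)(\lambda-\mu_2)$. *)

From Stdlib Require Import Reals.
Open Scope R_scope.

Definition Cpx : Type := (R * R)%type.
Definition Re (z : Cpx) : R := fst z.
Definition Im (z : Cpx) : R := snd z.
Definition RtoC (r : R) : Cpx := (r, 0).
Arguments RtoC r%_R_scope.
Definition Ci : Cpx := (0, 1).
Definition Cadd (z w : Cpx) : Cpx := (Re z + Re w, Im z + Im w).
Definition Copp (z : Cpx) : Cpx := (- Re z, - Im z).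
Definition Csub (z w : Cpx) : Cpx := Cadd z (Copp w).
Definition Cmul (z w : Cpx) : Cpx :=
  (Re z * Re w - Im z * Im w, Re z * Im w + Im z * Re w).
Definition Cconj (z : Cpx) : Cpx := (Re z, - Im z).
Definition Cnorm2 (z : Cpx) : R := Re z * Re z + Im z * Im z.

Declare Scope Cpx_scope.
Delimit Scope Cpx_scope with Cx.
Infix "+" := Cadd : Cpx_scope.
Infix "-" := Csub : Cpx_scope.
Infix "*" := Cmul : Cpx_scope.
Notation "- z" := (Copp z) : Cpx_scope.
Notation "z ^*" := (Cconj z) (at level 2, format "z ^*") : Cpx_scope.

Record Mat2 : Type := mkMat2 { m11 : Cpx; m12 : Cpx; m21 : Cpx; m22 : Cpx }.

Definition Mmul (A B : Mat2) : Mat2 :=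
  mkMat2 (m11 A * m11 B + m12 A * m21 B)%Cx (m11 A * m12 B + m12 A * m22 B)%Cx
         (m21 A * m11 B + m22 A * m21 B)%Cx (m21 A * m12 B + m22 A * m22 B)%Cx.
Definition Msub (A B : Mat2) : Mat2 :=
  mkMat2 (m11 A - m11 B)%Cx (m12 A - m12 B)%Cx (m21 A - m21 B)%Cx (m22 A - m22 B)%Cx.
Definition Mcomm (A B : Mat2) : Mat2 := Msub (Mmul A B) (Mmul B A).

Definition dx_C (f : R -> R -> Cpx) (x t : R) (d : Cpx) : Prop :=
  derivable_pt_lim (fun y => Re (f y t)) x (Re d) /\
  derivable_pt_lim (fun y => Im (f y t)) x (Im d).
Definition dt_C (f : R -> R -> Cpx) (x t : R) (d : Cpx) : Prop :=
  derivable_pt_lim (fun s => Re (f x s)) t (Re d) /\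
  derivable_pt_lim (fun s => Im (f x s)) t (Im d).

Definition dx_M (F : R -> R -> Mat2) (x t : R) (M : Mat2) : Prop :=
  dx_C (fun a b => m11 (F a b)) x t (m11 M) /\ dx_C (fun a b => m12 (F a b)) x t (m12 M) /\
  dx_C (fun a b => m21 (F a b)) x t (m21 M) /\ dx_C (fun a b => m22 (F a b)) x t (m22 M).
Definition dt_M (F : R -> R -> Mat2) (x t : R) (M : Mat2) : Prop :=
  dt_C (fun a b => m11 (F a b)) x t (m11 M) /\ dt_C (fun a b => m12 (F a b)) x t (m12 M) /\
  dt_C (fun a b => m21 (F a b)) x t (m21 M) /\ dt_C (fun a b => m22 (F a b)) x t (m22 M).

Definition smooth_derivs (p : R -> R -> Cpx) (D : nat -> nat -> R -> R -> Cpx) : Prop :=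
  D 0%nat 0%nat = p /\
  forall (i j : nat) (x t : R),
    dx_C (D i j) x t (D (S i) j x t) /\ dt_C (D i j) x t (D i (S j) x t).

Definition NLS (p : R -> R -> Cpx) (D : nat -> nat -> R -> R -> Cpx) : Prop :=
  forall x t : R,
    (Ci * D 0%nat 1%nat x t + D 2%nat 0%nat x t + RtoC ((2 * Cnorm2 (p x t))%R) * p x t)%Cx = RtoC 0.

(** * Lax matrices; p, px, pxx are the values of p, p_x, p_xx at the point *)
Definition UM (lam p : Cpx) : Mat2 :=
  mkMat2 (- (Ci * lam))%Cx (Ci * p)%Cx (Ci * p^*)%Cx (Ci * lam)%Cx.

Definition VM (lam p px : Cpx) : Mat2 :=
  mkMat2 (- (RtoC 2 * Ci * lam * lam) + Ci * RtoC (Cnorm2 p))%Cx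
         (RtoC 2 * Ci * lam * p - px)%Cx
         (RtoC 2 * Ci * lam * p^* + px^*)%Cx
         (RtoC 2 * Ci * lam * lam - Ci * RtoC (Cnorm2 p))%Cx.

Definition Psi11 (c0 c1 c2 : R) (p px : Cpx) (lam : Cpx) : Cpx :=
  (- (Ci * lam * lam * lam) - Ci * RtoC c2 * lam * lam
   + (RtoC ((1/2)%R) * Ci * RtoC (Cnorm2 p) - Ci * RtoC c1) * lam
   + RtoC ((1/4)%R) * (p * px^* - px * p^*)
   + RtoC ((1/2)%R) * Ci * RtoC c2 * RtoC (Cnorm2 p) - Ci * RtoC c0)%Cx.

Definition Psi12 (c0 c1 c2 : R) (p px pxx : Cpx) (lam : Cpx) : Cpx :=
  (Ci * p * lam * lam + (- (RtoC ((1/2)%R) * px) + Ci * RtoC c2 * p) * lam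
   - RtoC ((1/4)%R) * Ci * pxx - RtoC ((1/2)%R) * Ci * p * RtoC (Cnorm2 p)
   - RtoC ((1/2)%R) * RtoC c2 * px + Ci * RtoC c1 * p)%Cx.

Definition Psi21 (c0 c1 c2 : R) (p px pxx : Cpx) (lam : Cpx) : Cpx :=
  (Ci * p^* * lam * lam + (RtoC ((1/2)%R) * px^* + Ci * RtoC c2 * p^*) * lam
   - RtoC ((1/4)%R) * Ci * pxx^* - RtoC ((1/2)%R) * Ci * p^* * RtoC (Cnorm2 p)
   + RtoC ((1/2)%R) * RtoC c2 * px^* + Ci * RtoC c1 * p^*)%Cx.

Definition PsiM (c0 c1 c2 : R) (p px pxx : Cpx) (lam : Cpx) : Mat2 :=
  mkMat2 (Psi11 c0 c1 c2 p px lam) (Psi12 c0 c1 c2 p px pxx lam)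
         (Psi21 c0 c1 c2 p px pxx lam) (- Psi11 c0 c1 c2 p px lam)%Cx.

Definition PsiF (c0 c1 c2 : R) (D : nat -> nat -> R -> R -> Cpx) (lam : Cpx)
  : R -> R -> Mat2 :=
  fun x t => PsiM c0 c1 c2 (D 0%nat 0%nat x t) (D 1%nat 0%nat x t) (D 2%nat 0%nat x t) lam.

Definition two_phase_with (c0 c1 c2 : R) (D : nat -> nat -> R -> R -> Cpx) : Prop :=
  forall (lam : Cpx) (x t : R),
    dx_M (PsiF c0 c1 c2 D lam) x t
         (Mcomm (UM lam (D 0%nat 0%nat x t)) (PsiF c0 c1 c2 D lam x t)) /\
    dt_M (PsiF c0 c1 c2 D lam) x t
         (Mcomm (VM lam (D 0%nat 0%nat x t) (D 1%nat 0%nat x t)) (PsiF c0 c1 c2 D lam x t)).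

Definition nu1 (p : R -> R -> Cpx) (x t : R) : R := Cnorm2 (p x t).

(* Both derivatives of nu1 = |p|^2 are read off the coefficients of Psi12.
   Comparing coefficients in Psi12 = i p (lam - mu1) (lam - mu2) gives
   nu1 Im(mu1 + mu2) = -Re(p conj px)/2, hence d_x nu1 = -4 nu1 Im(mu1 + mu2),
   and nu1 Im(mu1 mu2) = -Im(conj p pxx)/4 + c2 Re(p conj px)/2, while NLS gives
   d_t nu1 = -2 Im(conj p pxx).  So, as nu1 > 0, both derivatives vanish iff
   mu1 + mu2 and mu1 mu2 are real, i.e. iff (lam - mu1)(lam - mu2) has real
   coefficients, i.e. iff its roots are real or complex conjugate. *)
From Stdlib Require Import Reals Lra Psatz.
Open Scope R_scope.

Lemma derivable_pt_lim_Cnorm2 (f : R -> Cpx) (y : R) (d : Cpx) :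
  derivable_pt_lim (fun z => Re (f z)) y (Re d) ->
  derivable_pt_lim (fun z => Im (f z)) y (Im d) ->
  derivable_pt_lim (fun z => Cnorm2 (f z)) y (2 * Re (f y * d^*)%Cx).
Proof.
  intros Hre Him.
  replace (2 * Re (f y * d^*)%Cx)
    with ((Re d * Re (f y) + Re (f y) * Re d) + (Im d * Im (f y) + Im (f y) * Im d))
    by (unfold Cmul, Cconj, Re, Im; simpl; ring).
  apply (derivable_pt_lim_plus (fun z => Re (f z) * Re (f z)) (fun z => Im (f z) * Im (f z)));
    apply derivable_pt_lim_mult; assumption.
Qed.

Lemma derivable_pt_lim_0_iff (h : R -> R) (y v : R) :
  derivable_pt_lim h y v -> (derivable_pt_lim h y 0 <-> v = 0).
Proof.
  intros Hv; split; intro H0.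
  - exact (uniqueness_limite h y v 0 Hv H0).
  - subst; exact Hv.
Qed.

Lemma NLS_Re_mul_conj_dt (p pt pxx : Cpx) :
  (Ci * pt + pxx + RtoC (2 * Cnorm2 p) * p)%Cx = RtoC 0 ->
  Re (p * pt^*)%Cx = - Im (p^* * pxx)%Cx.
Proof.
  destruct p as [a b], pt as [g h], pxx as [e f].
  unfold Cmul, Cadd, Cconj, Cnorm2, RtoC, Ci, Re, Im; simpl.
  intros E; injection E as E1 E2; nra.
Qed.

Section Psi12Roots.

Variables (c0 c1 c2 : R) (p px pxx mu1 mu2 : Cpx).
Hypothesis Hmu : forall lam : Cpx,
  Psi12 c0 c1 c2 p px pxx lam = (Ci * p * (lam - mu1) * (lam - mu2))%Cx.

(* Evaluating at lam = 0, 1, -1 separates the three coefficients. *)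
Lemma Psi12_Im_root_sum :
  Cnorm2 p * Im (mu1 + mu2)%Cx = - Re (p * px^*)%Cx / 2.
Proof.
  pose proof (Hmu (1, 0)) as E1; pose proof (Hmu (-1, 0)) as E2; revert E1 E2.
  destruct p as [a b], px as [c d], pxx as [e f], mu1 as [u1 v1], mu2 as [u2 v2].
  unfold Psi12, Cmul, Cadd, Csub, Copp, Cconj, Cnorm2, RtoC, Ci, Re, Im; simpl.
  intros E1 E2; injection E1 as E1r E1i; injection E2 as E2r E2i.
  pose proof (f_equal (Rmult a) E1r); pose proof (f_equal (Rmult a) E2r).
  pose proof (f_equal (Rmult b) E1i); pose proof (f_equal (Rmult b) E2i).
  lra.
Qed.

Lemma Psi12_Im_root_prod :
  Cnorm2 p * Im (mu1 * mu2)%Cx = - Im (p^* * pxx)%Cx / 4 + c2 * Re (p * px^*)%Cx / 2.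
Proof.
  pose proof (Hmu (0, 0)) as E0; revert E0.
  destruct p as [a b], px as [c d], pxx as [e f], mu1 as [u1 v1], mu2 as [u2 v2].
  unfold Psi12, Cmul, Cadd, Csub, Copp, Cconj, Cnorm2, RtoC, Ci, Re, Im; simpl.
  intros E0; injection E0 as E0r E0i.
  pose proof (f_equal (Rmult a) E0r); pose proof (f_equal (Rmult b) E0i).
  lra.
Qed.

Lemma Psi12_real_root_coeffs_iff :
  0 < Cnorm2 p ->
  (Re (p * px^*)%Cx = 0 /\ Im (p^* * pxx)%Cx = 0)
  <-> (Im (mu1 + mu2)%Cx = 0 /\ Im (mu1 * mu2)%Cx = 0).
Proof.
  intros Hn.
  pose proof Psi12_Im_root_sum as Hs; pose proof Psi12_Im_root_prod as Hq.
  split.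
  - intros [H1 H2]; rewrite H1, H2 in *; split.
    + apply (Rmult_eq_reg_l (Cnorm2 p)); lra.
    + apply (Rmult_eq_reg_l (Cnorm2 p)); lra.
  - intros [H1 H2]; rewrite H1 in Hs; rewrite H2 in Hq.
    assert (Re (p * px^*)%Cx = 0) as Hr by lra.
    rewrite Hr in Hq; split; lra.
Qed.

End Psi12Roots.

Lemma Im_root_sum_prod_eq0_iff (mu1 mu2 : Cpx) :
  (Im (mu1 + mu2)%Cx = 0 /\ Im (mu1 * mu2)%Cx = 0)
  <-> ((Im mu1 = 0 /\ Im mu2 = 0) \/ (mu2^*)%Cx = mu1).
Proof.
  destruct mu1 as [u1 v1], mu2 as [u2 v2].
  unfold Cadd, Cmul, Cconj, Re, Im; simpl.
  split.
  - intros [Hs Hq].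
    assert (Hv : v2 = - v1) by lra; subst v2.
    assert (Hz : v1 * (u2 - u1) = 0) by lra.
    destruct (Rmult_integral _ _ Hz) as [H | H].
    + left; lra.
    + right; f_equal; lra.
  - intros [[H1 H2] | H].
    + subst; split; ring.
    + injection H as -> Hv; split; nra.
Qed.

Theorem mainTheorem5
  (p : R -> R -> Cpx) (D : nat -> nat -> R -> R -> Cpx) (c0 c1 c2 : R)
  (Hsmooth : smooth_derivs p D) (Hnls : NLS p D)
  (Htwo : two_phase_with c0 c1 c2 D)
  (x t : R) (Hpos : 0 < nu1 p x t)
  (mu1 mu2 : Cpx)
  (Hmu : forall lam : Cpx,
      Psi12 c0 c1 c2 (p x t) (D 1%nat 0%nat x t) (D 2%nat 0%nat x t) lam
      = (Ci * p x t * (lam - mu1) * (lam - mu2))%Cx) :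
  (derivable_pt_lim (fun y => nu1 p y t) x 0 /\
   derivable_pt_lim (fun s => nu1 p x s) t 0)
  <-> ((Im mu1 = 0 /\ Im mu2 = 0) \/ Cconj mu2 = mu1).
Proof.
  destruct Hsmooth as [HD0 Hderiv].
  destruct (Hderiv 0%nat 0%nat x t) as [[Hxr Hxi] [Htr Hti]].
  rewrite HD0 in Hxr, Hxi, Htr, Hti.
  unfold nu1.
  rewrite (derivable_pt_lim_0_iff _ _ _ (derivable_pt_lim_Cnorm2 (fun y => p y t) _ _ Hxr Hxi)),
          (derivable_pt_lim_0_iff _ _ _ (derivable_pt_lim_Cnorm2 (p x) _ _ Htr Hti)).
  pose proof (Hnls x t) as Ht.
  rewrite (NLS_Re_mul_conj_dt _ _ _ Ht).
  rewrite <- Im_root_sum_prod_eq0_iff,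
    <- (Psi12_real_root_coeffs_iff c0 c1 c2 _ _ _ mu1 mu2 Hmu Hpos).
  lra.
Qed.
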